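(* Let $O=(Y,D,Z)$ with $Y,D\in\mathbb{R}$ and $Z=(Z_1,\dots,Z_p)\in\{0,1\}^p$ (row vector), $p\ge2$, $\mu^*=\mathbb{E}(Z)$. Assume: (ALICE model) There are potential outcomes $Y(d,z)$ with $Y=Y(D,Z)$ and parameters $\beta^*\in\mathbb{R}$, $\zeta^*,\psi^*\in\mathbb{R}^p$ such that $Y(d',z')-Y(d,z)=(d'-d)\beta^*+(z'-z)\zeta^*$ for all $d,d',z,z'$ and $\mathbb{E}\{Y(0,0)\mid Z\}=Z\psi^*$; write $\pi^*=\zeta^*+\psi^*$, so that $\mathbb{E}(Y-D\beta^*\mid Z)=Z\pi^*$. (Independent instruments) $Z_1,\dots,Z_p$ are mutually independent. (Interaction relevance) For fixed $2\le q\le p$ and $r=\sum_{k=2}^q\binom pk$ (held fixed, not growing with sample size), $M=-\mathbb{E}\{(\bar Z_{2,\mu^*}^\top,\dots,\bar Z_{q,\mu^*}^\top)^\top D\}\in\mathbb{R}^r$ is nonzero. Let $\bar m(O;\beta^*,\mu^*,\pi^* )=(\bar Z_{2,\mu^*}^\top,\dots,\bar Z_{q,\mu^*}^\top)^\top(Y-D\beta^*-Z\pi^* )$ and $\Omega=\mathbb{E}\{\bar m(O;\beta^*,\mu^*,\pi^* )\bar m(O;\beta^*,\mu^*,\pi^* )^\top\}$, assumed nonsingular. Consider the semiparametric model for $O$ defined by these assumptions (equivalently, by the moment restriction $\mathbb{E}\{(\bar Z_{2,\mu^*}^\top,\dots,\bar Z_{q,\mu^*}^\top)^\top(Y-D\beta)\}=0$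 identifying $\beta^*$), in which influence functions of regular asymptotically linear estimators of $\beta^*$ have the form $(\theta^\top M)^{-1}\theta^\top \bar m(O;\beta^*,\mu^*,\pi^* )$ for $\theta\in\mathbb{R}^r$ with $\theta^\top M\neq0$. Then the efficient influence function for $\beta^*$ is the one with $\theta=\theta_{\mathrm{opt}}=\Omega^{-1}M$, i.e. $(M^\top\Omega^{-1}M)^{-1}M^\top\Omega^{-1}\bar m(O;\beta^*,\mu^*,\pi^* )$, and the semiparametric efficiency bound for $\beta^*$ is $(M^\top\Omega^{-1}M)^{-1}$.
   Context: For $1\le k\le p$ and $\mu\in\mathbb{R}^p$, $\bar Z_{k,\mu}$ is the column vector (in a fixed order) of all demeaned $k$-th order interactions $\prod_{j\in x}(Z_j-\mu_j)$ over subsets $x\subseteq\{1,\dots,p\}$ with $|x|=k$. All expectations appearing are assumed finite. *)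

From HB Require Import structures.
From mathcomp Require Import all_boot all_order all_algebra.
From mathcomp Require Import all_classical all_reals all_analysis.
Set Implicit Arguments. Unset Strict Implicit. Unset Printing Implicit Defensive.
Import Order.TTheory GRing.Theory Num.Theory.
Local Open Scope classical_set_scope.
Local Open Scope ring_scope.

(* The vectors \bar Z_{k,mu}, k=2..q, stacked, are
   indexed by this finite type (in the fixed order given by [enum]). *)
Definition Ix (p q : nat) := {x : {set 'I_p} | (2 <= #|x| <= q)%N}.

Definition rdim (p q : nat) : nat := #|{: Ix p q}|.

Definition idx (p q : nat) (i : 'I_(rdim p q)) : {set 'I_p} :=
  val (enum_val (A := {: Ix p q}) i).

Section Defs.
Context (R : realType) (d : measure_display) (T : measurableType d).

Definition Ex (P : probability T R) (f : T -> R) : R := Rintegral P setT f.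

Definition binary (p : nat) (z : 'I_p -> R) : Prop :=
  forall j, z j = 0 \/ z j = 1.

Definition mutually_independent (P : probability T R) (p : nat)
    (Z : T -> 'I_p -> R) : Prop :=
  forall (S : {set 'I_p}) (A : 'I_p -> set R),
    (forall j, measurable (A j)) ->
    P (\big[setI/setT]_(j in S) ((fun w => Z w j) @^-1` A j))
    = (\prod_(j in S) P ((fun w => Z w j) @^-1` A j))%E.

Definition zbar (p : nat) (Z : T -> 'I_p -> R) (mu : 'I_p -> R)
    (x : {set 'I_p}) (w : T) : R :=
  \prod_(j in x) (Z w j - mu j).

Definition mbar (p q : nat) (Y D : T -> R) (Z : T -> 'I_p -> R)
    (beta : R) (mu pi : 'I_p -> R) (w : T) : 'cV[R]_(rdim p q) :=
  \col_i (zbar Z mu (idx i) w * (Y w - D w * beta - \sum_j Z w j * pi j)).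

End Defs.

From HB Require Import structures.
From mathcomp Require Import all_boot all_order all_algebra.
From mathcomp Require Import all_classical all_reals all_analysis.
From mathcomp Require Import measurable_realfun.
From mathcomp Require Import ring lra.
Set Implicit Arguments.
Unset Strict Implicit.
Unset Printing Implicit Defensive.
Import Order.TTheory GRing.Theory Num.Theory.
Local Open Scope classical_set_scope.
Local Open Scope ring_scope.

(* For [theta] with [theta^T M != 0] the influence function is the linear
   statistic [u^T m] with [u = theta / theta^T M], so its variance is
   [u^T Omega u] subject to [u^T M = 1], Omega being the second-moment matrix
   of [m].  Cauchy-Schwarz for the positive semidefinite form of Omega,
   applied to [u] and [Omega^-1 M], gives
   [1 = (u^T M)^2 <= (u^T Omega u) (M^T Omega^-1 M)], with equality at
   [u = Omega^-1 M / (M^T Omega^-1 M)].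
   In the paper the model assumptions (ALICE, independent instruments) are
   what force influence functions into this shape; here the shape is part of
   the statement, and of the hypotheses only binary instruments and a
   square-integrable residual are used, to make the moments of [m] finite. *)

Definition bform {R : comPzRingType} {n : nat} (S : 'M[R]_n) (u v : 'cV[R]_n) : R :=
  (u^T *m S *m v) 0 0.

Section BilinearForm.
Context (R : comPzRingType) (n : nat) (S : 'M[R]_n).

Lemma mulmx_trZl a (u v : 'cV[R]_n) : ((a *: u)^T *m v) 0 0 = a * (u^T *m v) 0 0.
Proof. by rewrite linearZ /= -scalemxAl mxE. Qed.

Lemma bform_sym : S^T = S -> forall u v, bform S u v = bform S v u.
Proof.
move=> S_sym u v; rewrite /bform.
have -> : v^T *m S *m u = (u^T *m S *m v)^T by rewrite !trmx_mul trmxK S_sym mulmxA.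
by rewrite [RHS]mxE.
Qed.

Lemma bformZl a u v : bform S (a *: u) v = a * bform S u v.
Proof. by rewrite /bform linearZ /= -!scalemxAl mxE. Qed.

Lemma bformZr a u v : bform S u (a *: v) = a * bform S u v.
Proof. by rewrite /bform -scalemxAr mxE. Qed.

Lemma bformDl u1 u2 v : bform S (u1 + u2) v = bform S u1 v + bform S u2 v.
Proof. by rewrite /bform linearD /= !mulmxDl mxE. Qed.

Lemma bformDr u v1 v2 : bform S u (v1 + v2) = bform S u v1 + bform S u v2.
Proof. by rewrite /bform mulmxDr mxE. Qed.

Lemma bform_comb2 s t u v : S^T = S ->
  bform S (s *: u + t *: v) (s *: u + t *: v)
  = s ^+ 2 * bform S u u + 2 * s * t * bform S u v + t ^+ 2 * bform S v v.
Proof.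
move=> S_sym; rewrite !(bformDl, bformDr, bformZl, bformZr) (bform_sym S_sym v u).
ring.
Qed.

End BilinearForm.

Lemma mulmx_trmx_self_eq0 (R : realDomainType) (n : nat) (u : 'cV[R]_n) :
  ((u^T *m u) 0 0 == 0) = (u == 0).
Proof.
apply/idP/eqP => [|->]; last by rewrite mulmx0 mxE.
rewrite mxE psumr_eq0 => [/allP u0|i _]; last by rewrite !mxE -expr2 sqr_ge0.
apply/matrixP => i j; have := u0 i (mem_index_enum _).
by rewrite (ord1 j) !mxE mulf_eq0 orbb => /eqP.
Qed.

Lemma discr_le_of_quadratic_ge0 (R : realFieldType) (a c e : R) :
  (forall s t, 0 <= s ^+ 2 * a + 2 * s * t * c + t ^+ 2 * e) -> c ^+ 2 <= a * e.
Proof.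
(* [(s, t) = (-c, a)] and [(e, -c)] give [a (a e - c^2) >= 0] and
   [e (a e - c^2) >= 0]; the case [a = e = 0] is settled by [(1, -c)]. *)
move=> q_ge0.
have a_ge0 := q_ge0 1 0; have e_ge0 := q_ge0 0 1.
have ha := q_ge0 (- c) a; have he := q_ge0 e (- c); have h1 := q_ge0 1 (- c).
rewrite leNgt; apply/negP => lt_ae.
have a0 : a = 0 by nra.
have e0 : e = 0 by nra.
by move: h1 lt_ae; rewrite a0 e0; nra.
Qed.

Section PsdForm.
Context (R : realFieldType) (n : nat) (S : 'M[R]_n).
Hypotheses (S_sym : S^T = S) (S_psd : forall u, 0 <= bform S u u).

Lemma bform_cauchy_schwarz u v : bform S u v ^+ 2 <= bform S u u * bform S v v.
Proof.
apply: discr_le_of_quadratic_ge0 => s t.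
by rewrite -bform_comb2 //; apply: S_psd.
Qed.

Hypothesis S_unit : S \in unitmx.
Variable M : 'cV[R]_n.

Lemma bform_invmxr u : bform S u (invmx S *m M) = (u^T *m M) 0 0.
Proof. by rewrite /bform -!mulmxA (mulmxA S) mulmxV // mul1mx. Qed.

Let b := bform (invmx S) M M.

Lemma trmx_invmx_mul : (invmx S *m M)^T = M^T *m invmx S.
Proof. by rewrite trmx_mul trmx_inv S_sym. Qed.

Lemma bform_invmx_opt : bform S (invmx S *m M) (invmx S *m M) = b.
Proof. by rewrite bform_invmxr trmx_invmx_mul. Qed.

Lemma sqr_mulmx_le_bform u : (u^T *m M) 0 0 ^+ 2 <= bform S u u * b.
Proof. by rewrite -bform_invmx_opt -bform_invmxr; exact: bform_cauchy_schwarz. Qed.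

Lemma bform_invmx_gt0 : M != 0 -> 0 < b.
Proof.
move=> M_neq0; have b_ge0 : 0 <= b by rewrite -bform_invmx_opt S_psd.
rewrite lt_def b_ge0 andbT; apply: contra M_neq0 => /eqP b0.
have := sqr_mulmx_le_bform M; rewrite b0 mulr0 => MM_sqr_le0.
by rewrite -mulmx_trmx_self_eq0 -sqrf_eq0 eq_le MM_sqr_le0 sqr_ge0.
Qed.

Lemma invf_bform_invmx_le u : M != 0 -> (u^T *m M) 0 0 = 1 -> b^-1 <= bform S u u.
Proof.
move=> M_neq0 uM1; have b_gt0 := bform_invmx_gt0 M_neq0.
have := sqr_mulmx_le_bform u; rewrite uM1 expr1n => le1.
by rewrite -(ler_pM2r b_gt0) mulVf ?gt_eqF.
Qed.

Lemma bform_invmx_normalized : M != 0 ->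
  bform S (b^-1 *: (invmx S *m M)) (b^-1 *: (invmx S *m M)) = b^-1.
Proof.
move=> M_neq0; have b_neq0 : b != 0 by rewrite gt_eqF // bform_invmx_gt0.
by rewrite bformZl bformZr bform_invmx_opt mulrA mulfVK.
Qed.
End PsdForm.

Section SecondMoments.
Context (R : realType) (d : measure_display) (T : measurableType d).
Context (mu : {measure set T -> \bar R}) (D : set T) (mD : measurable D).

Lemma integrable_sumR (I : Type) (s : seq I) (f : I -> T -> R) :
  (forall i, mu.-integrable D (EFin \o f i)) ->
  mu.-integrable D (EFin \o (fun x => \sum_(i <- s) f i x)).
Proof.
move=> f_int.
apply: (eq_integrable mD _ _ _ (integrable_sum mD s (P := xpredT) (fun i _ => f_int i))).
by move=> x _; rewrite /= sumEFin.
Qed.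

Lemma Rintegral_sum (I : Type) (s : seq I) (f : I -> T -> R) :
  (forall i, mu.-integrable D (EFin \o f i)) ->
  \int[mu]_(x in D) (\sum_(i <- s) f i x) = \sum_(i <- s) \int[mu]_(x in D) f i x.
Proof.
move=> f_int; elim: s => [|i s IHs].
  by under eq_Rintegral do rewrite big_nil; rewrite Rintegral_cst // mul0r big_nil.
under eq_Rintegral do rewrite big_cons.
by rewrite RintegralD ?IHs ?big_cons //; exact: integrable_sumR.
Qed.

Lemma Rintegral_sqr_mulmx n (m : T -> 'cV[R]_n) (u : 'cV[R]_n) :
  (forall i k, mu.-integrable D (EFin \o (fun x => m x i 0 * m x k 0))) ->
  \int[mu]_(x in D) ((u^T *m m x) 0 0 ^+ 2)
  = bform (\matrix_(i, k) \int[mu]_(x in D) (m x i 0 * m x k 0)) u u.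
Proof.
move=> m2_int.
have sqr_sum x : (u^T *m m x) 0 0 ^+ 2
    = \sum_k \sum_i u i 0 * u k 0 * (m x i 0 * m x k 0).
  rewrite !mxE expr2 big_distrr; apply: eq_bigr => k _.
  by rewrite big_distrl; apply: eq_bigr => i _; rewrite !mxE mulrACA.
have term_int i k : mu.-integrable D (EFin \o (fun x => u i 0 * u k 0 * (m x i 0 * m x k 0))).
  apply: (eq_integrable mD _ _ _ (integrableZl mD (u i 0 * u k 0) (m2_int i k))).
  by move=> x _ /=; rewrite EFinM.
under eq_Rintegral do rewrite sqr_sum.
rewrite Rintegral_sum => [|k]; last by apply: integrable_sumR => i.
rewrite /bform mxE; apply: eq_bigr => k _.
rewrite Rintegral_sum // mxE big_distrl; apply: eq_bigr => i _.
by rewrite RintegralZl // !mxE mulrAC.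
Qed.

End SecondMoments.

Section InteractionMoments.
Context (R : realType) (d : measure_display) (T : measurableType d).
Context (P : {measure set T -> \bar R}) (p : nat) (Z : T -> 'I_p -> R) (mu : 'I_p -> R).
Hypotheses (mZ : forall j, measurable_fun setT (fun w => Z w j))
           (Z_binary : forall w, binary (Z w)).

Lemma measurable_zbar x : measurable_fun setT (zbar Z mu x).
Proof.
have -> : zbar Z mu x
    = (fun w => \prod_(j <- index_enum 'I_p) (if j \in x then Z w j - mu j else 1)).
  by apply/funext => w; rewrite /zbar big_mkcond.
apply: measurable_prod => j _; case: (j \in x) => //.
exact: measurable_funB.
Qed.

Lemma normr_zbar_le x w : `|zbar Z mu x w| <= \prod_(j in x) (1 + `|mu j|).
Proof.
rewrite /zbar normr_prod; apply: ler_prod => j _.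
rewrite normr_ge0 /=; apply: (le_trans (ler_normB _ _)); rewrite lerD2r.
by case: (Z_binary w j) => ->; rewrite ?normr0 ?normr1.
Qed.

Lemma integrable_mbarM q Y D beta pi :
  P.-integrable setT (EFin \o (fun w => (Y w - D w * beta - \sum_j Z w j * pi j) ^+ 2)) ->
  forall i k, P.-integrable setT
    (EFin \o (fun w => mbar q Y D Z beta mu pi w i 0 * mbar q Y D Z beta mu pi w k 0)).
Proof.
move=> res2_int i k; set zz := fun w => zbar Z mu (idx i) w * zbar Z mu (idx k) w.
have zz_bounded : [bounded zz w | w in setT].
  exists ((\prod_(j in idx i) (1 + `|mu j|)) * \prod_(j in idx k) (1 + `|mu j|)).
  split; first exact: num_real.
  move=> c c_gt w _; apply: le_trans (ltW c_gt).
  by rewrite normrM ler_pM ?normr_zbar_le.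
have mzz : measurable_fun setT zz by apply: measurable_funM; exact: measurable_zbar.
apply: (eq_integrable measurableT _ _ _ (integrableMr measurableT mzz zz_bounded res2_int)).
by move=> w _; rewrite /= !mxE -EFinM /zz; congr EFin; ring.
Qed.

End InteractionMoments.

Theorem theorem2 (R : realType) (d : measure_display) (T : measurableType d)
  (P : probability T R) (p q : nat)
  (Y D : T -> R) (Z : T -> 'I_p -> R)
  (Yp : R -> ('I_p -> R) -> T -> R)
  (beta : R) (zeta psi : 'I_p -> R) :
  (2 <= p)%N -> (2 <= q)%N -> (q <= p)%N ->
  (* observed data: measurability / finite expectations *)
  measurable_fun setT Y -> measurable_fun setT D ->
  (forall j, measurable_fun setT (fun w => Z w j)) ->
  (forall w, binary (Z w)) ->
  P.-integrable setT (EFin \o Y) -> P.-integrable setT (EFin \o D) ->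
  P.-integrable setT (EFin \o Yp 0 (fun _ => 0)) ->
  P.-integrable setT (EFin \o (fun w =>
     (Y w - D w * beta - \sum_j Z w j * (zeta j + psi j)) ^+ 2)) ->
  (* ALICE model *)
  (forall w, Y w = Yp (D w) (Z w) w) ->
  (forall (d0 d1 : R) (z0 z1 : 'I_p -> R), binary z0 -> binary z1 ->
     forall w, Yp d1 z1 w - Yp d0 z0 w
               = (d1 - d0) * beta + \sum_j (z1 j - z0 j) * zeta j) ->
  (* E{Y(0,0) | Z} = Z psi  (Z is discrete, stated cell by cell) *)
  (forall z : 'I_p -> R, binary z ->
     Rintegral P [set w | Z w = z] (Yp 0 (fun _ => 0))
     = (\sum_j z j * psi j) * fine (P [set w | Z w = z])) ->
  (* independent instruments *)
  mutually_independent P Z ->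
  let mu := fun j => Ex P (fun w => Z w j) in
  let pi := fun j => zeta j + psi j in
  let M : 'cV[R]_(rdim p q) :=
    \col_i (- Ex P (fun w => zbar Z mu (idx i) w * D w)) in
  let mb := mbar q Y D Z beta mu pi in
  let Omega : 'M[R]_(rdim p q) :=
    \matrix_(i, k) Ex P (fun w => mb w i 0 * mb w k 0) in
  (* interaction relevance; nonsingularity of Omega *)
  M != 0 ->
  Omega \in unitmx ->
  let IF := fun (theta : 'cV[R]_(rdim p q)) (w : T) =>
    (theta^T *m mb w) 0 0 / (theta^T *m M) 0 0 in
  let theta_opt := invmx Omega *m M in
  let bound := ((M^T *m invmx Omega *m M) 0 0)^-1 in
  [/\ (theta_opt^T *m M) 0 0 != 0,
      (forall w, IF theta_opt w
                 = bound * (M^T *m invmx Omega *m mb w) 0 0),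
      (forall theta : 'cV[R]_(rdim p q), (theta^T *m M) 0 0 != 0 ->
         Ex P (fun w => IF theta_opt w ^+ 2) <= Ex P (fun w => IF theta w ^+ 2))
    & Ex P (fun w => IF theta_opt w ^+ 2) = bound].
Proof.
move=> _ _ _ _ _ mZ Z_binary _ _ _ res2_int _ _ _ _ mu pi M mb Omega M_neq0 Omega_unit
  IF theta_opt bound.
have mb2_int := integrable_mbarM mu mZ Z_binary res2_int.
have Omega_sym : Omega^T = Omega.
  by apply/matrixP => i k; rewrite !mxE; congr Ex; apply/funext => w; rewrite mulrC.
have Omega_psd u : 0 <= bform Omega u u.
  by rewrite -Rintegral_sqr_mulmx //; apply: Rintegral_ge0 => w _; exact: sqr_ge0.
have Ex_IF2 theta : Ex P (fun w => IF theta w ^+ 2)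
    = bform Omega (((theta^T *m M) 0 0)^-1 *: theta) (((theta^T *m M) 0 0)^-1 *: theta).
  rewrite -Rintegral_sqr_mulmx //; apply: eq_Rintegral => w _.
  by rewrite mulmx_trZl mulrC.
have theta_optT : theta_opt^T = M^T *m invmx Omega := trmx_invmx_mul Omega_sym M.
have theta_opt_M : (theta_opt^T *m M) 0 0 = bform (invmx Omega) M M by rewrite theta_optT.
have b_gt0 := bform_invmx_gt0 Omega_sym Omega_psd Omega_unit M_neq0.
have Ex_IF2_opt : Ex P (fun w => IF theta_opt w ^+ 2) = bound.
  by rewrite Ex_IF2 theta_opt_M bform_invmx_normalized.
split => //.
- by rewrite theta_opt_M gt_eqF.
- by move=> w; rewrite /IF theta_opt_M theta_optT mulrC.
- move=> theta theta_M_neq0; rewrite Ex_IF2_opt Ex_IF2.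
  by apply: invf_bform_invmx_le => //; rewrite mulmx_trZl mulVf.
Qed.
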